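(* Let $A$ be a hyperoperator on $\mathbb{R}^n$ on the complex Banach space $X$, let $f\in\mathcal{E}(\mathbb{R}^n,\mathbb{R}^m)$, and let $X'=\{x\in D_A: f(a)x=0\}$ and $Y=\overline{X'}$. Then $Y$ is an $a$-invariant closed subspace of $X$ (in particular $a_j$ maps $X'$ into $X'$ and $A(\phi)Y\subset Y$ for all $\phi\in\mathcal{D}(\mathbb{R}^n)$), and the restriction $a'=a|_Y$ is a hyperoperator, i.e. $A'(\phi):=A(\phi)|_Y$ defines a hyperoperator on $\mathbb{R}^n$ on the Banach space $Y$. Moreover $D_{A'}=X'$ and $$\operatorname{int}\{f=0\}\cap\sigma(A)\subset\sigma(A')\subset\{f=0\}\cap\sigma(A).$$ If $\{f=0\}$ contains an open subset of $\mathbb{R}^n$ that meets $\sigma(A)$, then $Y\neq\{0\}$.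
   Context: $X$ is a complex Banach space, $L(X)$ the bounded operators. $\mathcal{D}(\mathbb{R}^n)=C_c^\infty(\mathbb{R}^n)$ (complex-valued); $\mathcal{E}(\mathbb{R}^n,\mathbb{R}^m)$ the smooth maps $\mathbb{R}^n\to\mathbb{R}^m$. A hyperoperator on $\mathbb{R}^n$ on a Banach space $Z$ is a linear map $B:\mathcal{D}(\mathbb{R}^n)\to L(Z)$, continuous ($B(\phi_j)\to0$ in operator norm when $\phi_j\to0$ in $\mathcal{D}(\mathbb{R}^n)$), multiplicative ($B(\phi\psi)=B(\phi)B(\psi)$), with (i) $D_B:=\bigcup_\phi\operatorname{Im}B(\phi)$ dense in $Z$ and (ii) $\bigcap_\phi\operatorname{Ker}B(\phi)=\{0\}$. For smooth $g:\mathbb{R}^n\to\mathbb{R}^k$ and $x\in D_A$ written $x=A(\phi)y$, $g(a)x:=A(g\phi)y$ (well defined, componentwise); $a_j:=g_j(a)$ with $g_j(\xi)=\xi_j$. $\sigma(A)$ denotes the support of $A$ as an $L(X)$-valued distribution; $\{f=0\}=f^{-1}(0)$. *)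

From HB Require Import structures.
From mathcomp Require Import all_boot all_order all_algebra.
From mathcomp Require Import all_classical all_reals all_analysis.
From mathcomp Require Import complex.
Set Implicit Arguments. Unset Strict Implicit. Unset Printing Implicit Defensive.
Import Order.TTheory GRing.Theory Num.Theory.
Import numFieldNormedType.Exports.
Local Open Scope ring_scope.
Local Open Scope classical_set_scope.

Section Hyper.
Variable R : realType.
Variable n : nat.
Notation pt := 'rV[R]_n.
Notation C := R[i].

Definition basis_vec (i : 'I_n) : pt := delta_mx ord0 i.

Definition iterD (s : seq 'I_n) (g : pt -> R) : pt -> R :=
  foldr (fun i h => fun x => 'D_(basis_vec i) h x) g s.

Definition smooth (g : pt -> R) : Prop :=
  forall s : seq 'I_n,
    continuous (iterD s g) /\ forall (i : 'I_n) (x : pt), derivable (iterD s g) x (basis_vec i).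

Definition csmooth (phi : pt -> C) : Prop :=
  smooth (fun x => complex.Re (phi x)) /\ smooth (fun x => complex.Im (phi x)).

Definition cD (s : seq 'I_n) (phi : pt -> C) : pt -> C :=
  fun x => Complex (iterD s (fun y => complex.Re (phi y)) x)
                   (iterD s (fun y => complex.Im (phi y)) x).

Definition fsupp (phi : pt -> C) : set pt := closure [set x | phi x != 0].

Definition test_fun (phi : pt -> C) : Prop := csmooth phi /\ compact (fsupp phi).

Definition Dcvg0 (phi : nat -> pt -> C) : Prop :=
  (forall k, test_fun (phi k)) /\
  (exists K : set pt, compact K /\ forall k, fsupp (phi k) `<=` K) /\
  (forall (s : seq 'I_n) (e : R), 0 < e ->
     exists N : nat, forall k, (N <= k)%N -> forall x, `|cD s (phi k) x| < (e%:C)%C).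

Definition rmul (g : pt -> R) (phi : pt -> C) : pt -> C :=
  fun x => ((g x)%:C)%C * phi x.

Definition closed_subspace (X : completeNormedModType C) (Y : set X) : Prop :=
  closed Y /\ Y 0 /\ (forall y z, Y y -> Y z -> Y (y + z)) /\
  (forall (c : C) y, Y y -> Y (c *: y)).

Definition DomH (X : completeNormedModType C) (Y : set X) (B : (pt -> C) -> X -> X)
  : set X := [set x | exists phi, test_fun phi /\ exists y, Y y /\ x = B phi y].

(* B(phi)|_Y, phi in D(R^n), is a hyperoperator on R^n on the Banach space Y
   (Y a closed subspace of X; Y = setT gives a hyperoperator on X). *)
Definition hyperop_on (X : completeNormedModType C) (Y : set X)
  (B : (pt -> C) -> X -> X) : Prop :=
  (forall phi, test_fun phi ->
     (forall y, Y y -> Y (B phi y)) /\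
     (forall (c : C) y z, Y y -> Y z -> B phi (c *: y + z) = c *: B phi y + B phi z) /\
     (exists M : R, forall y, Y y -> `|B phi y| <= (M%:C)%C * `|y|)) /\
  (forall (c : C) phi psi, test_fun phi -> test_fun psi ->
     forall y, Y y -> B (fun x => c * phi x + psi x) y = c *: B phi y + B psi y) /\
  (forall phik : nat -> pt -> C, Dcvg0 phik ->
     forall e : R, 0 < e -> exists N : nat, forall k, (N <= k)%N ->
       forall y, Y y -> `|B (phik k) y| <= (e%:C)%C * `|y|) /\
  (forall phi psi, test_fun phi -> test_fun psi ->
     forall y, Y y -> B (fun x => phi x * psi x) y = B phi (B psi y)) /\
  Y `<=` closure (DomH Y B) /\
  (forall y, Y y -> (forall phi, test_fun phi -> B phi y = 0) -> y = 0).

(* support sigma of B|_Y as an L(Y)-valued distribution *)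
Definition dsupp (X : completeNormedModType C) (Y : set X) (B : (pt -> C) -> X -> X)
  : set pt :=
  [set xi | forall U : set pt, open U -> U xi ->
     exists phi, test_fun phi /\ fsupp phi `<=` U /\ exists y, Y y /\ B phi y != 0].

(* X' = { x in D_A : f(a) x = 0 }, with f(a)(A(phi) y) := A(f phi) y componentwise *)
Definition Xprime (m : nat) (X : completeNormedModType C) (A : (pt -> C) -> X -> X)
  (f : pt -> 'rV[R]_m) : set X :=
  [set x | exists phi, test_fun phi /\ exists y,
     x = A phi y /\ forall j : 'I_m, A (rmul (fun z => f z ord0 j) phi) y = 0].

End Hyper.

From Pilot Require Import Defs.
From HB Require Import structures.
From mathcomp Require Import all_boot all_order all_algebra.
From mathcomp Require Import all_classical all_reals all_analysis.
From mathcomp Require Import complex ring lra.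
Import Order.TTheory GRing.Theory Num.Theory.
Import numFieldNormedType.Exports.
Local Open Scope ring_scope.
Local Open Scope classical_set_scope.
Set Implicit Arguments. Unset Strict Implicit. Unset Printing Implicit Defensive.

(* Write [f_j] for the components of [f]. For [x = A(phi) y] in [X'] and a test
   function [g], [A(f_j g) x = A(g) (A(f_j phi) y) = 0], and by continuity [A(f_j g)]
   kills all of [Y]; hence [A(phi) y] lies in [X'] for every [y] in [Y], which gives
   the invariance of [Y] and [D_A' = X']. [X'] is a subspace because one cutoff equal
   to 1 on the supports of [phi_1] and [phi_2] fixes [A(phi_1) y_1 + A(phi_2) y_2].
   Near a point where some [f_j] does not vanish every test function is [f_j q] with
   [q] a test function, so [A'] vanishes there; near an interior point of [{f = 0}]
   a cutoff [rh] supported in [{f = 0}] gives [A(rh) y] in [X'] with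
   [A(phi) (A(rh) y) = A(phi) y]. All cutoffs and quotients are built from
   [t |-> exp(-1/t)]. *)

Section FlatExp.
Variable R : realType.
Implicit Types (P : {poly R}) (t : R).

Definition flat P t : R := if 0 < t then P.[t^-1] * expR (- t^-1) else 0.

Definition flat_dpoly P : {poly R} := (P - P^`()) * 'X^2.

Lemma flat0 P : flat P 0 = 0.
Proof. by rewrite /flat ltxx. Qed.

Lemma flat_le0 P t : t <= 0 -> flat P t = 0.
Proof. by move=> t0; rewrite /flat ltNge t0. Qed.

Lemma flatZ (k : R) P t : flat (k *: P) t = k * flat P t.
Proof. by rewrite /flat; case: ifPn => _; rewrite ?mulr0 // hornerZ mulrA. Qed.

Lemma flat_mulX P t : t^-1 * flat P t = flat (P * 'X) t.
Proof. by rewrite /flat; case: ifPn => [t0|_]; rewrite ?mulr0 // hornerMX; ring. Qed.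

Lemma flat1_gt0 t : 0 < t -> 0 < flat 1 t.
Proof. by move=> t0; rewrite /flat t0 hornerE mul1r expR_gt0. Qed.

Lemma flat1_ge0 t : 0 <= flat 1 t.
Proof. by rewrite /flat; case: ifPn => // _; rewrite hornerE mul1r expR_ge0. Qed.

(* With [u = 1/t >= 1]: [|P(u)| <= S u^d] and [exp u >= u^(d+1) / (d+1)!]. *)
Lemma flat_le_linear P : exists K : R, 0 <= K /\
  forall t, `|t| <= 1 -> `|flat P t| <= K * `|t|.
Proof.
pose d := size P; pose S := \sum_(i < d) `|P`_i|.
have S0 : 0 <= S by apply: sumr_ge0 => i _.
have K0 : 0 <= S * (d.+1)`!%:R by exact: mulr_ge0.
exists (S * (d.+1)`!%:R); split => // t.
rewrite /flat; case: ifPn => [t0|_]; last by rewrite normr0 => _; exact: mulr_ge0.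
rewrite (gtr0_norm t0) => t1; set u := t^-1.
have u1 : 1 <= u by rewrite /u invf_ge1.
have u0 : 0 < u by apply: lt_le_trans u1.
have hP : `|P.[u]| <= S * u ^+ d.
  rewrite horner_coef /S mulr_suml; apply: le_trans (ler_norm_sum _ _ _) _.
  apply: ler_sum => i _; rewrite normrM normrX (ger0_norm (ltW u0)).
  by apply: ler_wpM2l => //; apply: ler_weXn2l => //; exact: ltnW (ltn_ord i).
have F0 : 0 < (d.+1)`!%:R :> R by rewrite ltr0n fact_gt0.
have ud0 : 0 < u ^+ d.+1 / (d.+1)`!%:R by rewrite divr_gt0 // exprn_gt0.
have he : u ^+ d.+1 / (d.+1)`!%:R <= expR u.
  by apply: le_trans (expR_ge1Dxn d (ltW u0)); rewrite lerDr.
rewrite normrM (ger0_norm (expR_ge0 _)) expRN.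
apply: (@le_trans _ _ (S * u ^+ d * (u ^+ d.+1 / (d.+1)`!%:R)^-1)).
  apply: ler_pM; [exact: normr_ge0 | by rewrite invr_ge0 expR_ge0 | exact: hP |].
  by rewrite lef_pV2 // ?posrE // expR_gt0.
have ud : u ^+ d != 0 by rewrite expf_neq0 // gt_eqF.
have -> : S * u ^+ d * (u ^+ d.+1 / (d.+1)`!%:R)^-1 = S * (d.+1)`!%:R * u^-1.
  by rewrite exprS; field; rewrite ud !gt_eqF.
by rewrite /u invrK.
Qed.

Lemma flat_is_derive0 P : is_derive (0 : R) 1 (flat P) 0.
Proof.
have [K [K0 HK]] := flat_le_linear (P * 'X).
have cv : (fun h : R => h^-1 *: ((flat P \o shift 0) (h *: 1) - flat P 0)) @ 0^' --> (0 : R).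
  apply/cvgrPdist_lt => e e0.
  have e1 : 0 < Num.min 1 (e / (K + 1)) by rewrite lt_min ltr01 divr_gt0 // ltr_wpDl.
  near=> h.
  have hn : `|h| < Num.min 1 (e / (K + 1)) by near: h; exact: dnbhs0_lt.
  rewrite /= flat0 subr0 sub0r normrN addr0 [_%:A]mulr1 -[_ *: _]/(h^-1 * flat P h).
  rewrite flat_mulX; move: hn; rewrite lt_min => /andP[h1 h2].
  apply: le_lt_trans (HK _ (ltW h1)) _.
  apply: (@le_lt_trans _ _ ((K + 1) * `|h|)); first by rewrite ler_wpM2r ?lerDl.
  by rewrite mulrC -ltr_pdivlMr // ltr_wpDl.
by split; [apply/cvg_ex; exists 0 | exact: cvg_lim cv].
Unshelve. all: by end_near. Qed.

Lemma flat_is_derive P t : is_derive t (1 : R) (flat P) (flat (flat_dpoly P) t).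
Proof.
have [t0|tn0|->] := ltgtP t 0; last by rewrite flat0; exact: flat_is_derive0.
  rewrite flat_le0 ?ltW //; apply: near_eq_is_derive (is_derive_cst (0 : R) t 1).
  by near=> s; rewrite flat_le0 // ltW //; near: s; exact: lt_nbhsl.
have dV : is_derive t 1 (fun s : R => s^-1) (- t ^- 2).
  by have := @is_deriveV R id t 1 1 (lt0r_neq0 tn0) (is_derive_id _ _); rewrite /= scaler1.
have dP : is_derive t 1 (horner P \o (fun s : R => s^-1)) ((P^`()).[t^-1] * - t ^- 2).
  exact: is_derive1_comp.
have dNV : is_derive t 1 (fun s : R => - s^-1) (t ^- 2).
  by rewrite -[X in is_derive _ _ _ X]opprK; exact: is_deriveN.
have dE : is_derive t 1 (expR \o (fun s : R => - s^-1)) (expR (- t^-1) * t ^- 2).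
  exact: is_derive1_comp.
suff -> : flat (flat_dpoly P) t = (horner P \o GRing.inv) t *: (expR (- t^-1) / t ^+ 2) +
     (expR \o (fun s : R => - s^-1)) t *: (P^`().[t^-1] * - t ^- 2).
  apply: near_eq_is_derive (is_deriveM dP dE); near=> s.
  by rewrite /flat ifT //; near: s; exact: lt_nbhsr.
rewrite /flat tn0 /flat_dpoly /= hornerM hornerXn hornerD hornerN -![_ *: _]/(_ * _).
by field; rewrite lt0r_neq0.
Unshelve. all: by end_near. Qed.

End FlatExp.

Section SmoothCalculus.
Variables (R : realType) (n : nat).
Local Notation pt := 'rV[R]_n.
Local Notation bv := (@basis_vec R n).
Implicit Types (g u v w : pt -> R).

Lemma iterD_rcons s i g : Defs.iterD (rcons s i) g = Defs.iterD s ('D_(bv i) g).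
Proof. by elim: s => //= j s ->. Qed.

Definition deriv_closed (F : set (pt -> R)) := forall g, F g ->
  [/\ continuous g, (forall i x, derivable g x (bv i)) & forall i, F ('D_(bv i) g)].

Lemma deriv_closed_smooth F : deriv_closed F -> F `<=` @smooth R n.
Proof.
move=> hF g Fg s; have : F (Defs.iterD s g).
  by elim: s => //= i s IH; have [_ _] := hF _ IH; apply.
by case/hF.
Qed.

Lemma smooth_deriv_closed : deriv_closed (@smooth R n).
Proof.
move=> g sg; split; [exact: (sg [::]).1 | exact: (sg [::]).2 |].
by move=> i s; rewrite -iterD_rcons; exact: sg.
Qed.

Lemma smooth_cst (c : R) : smooth (fun _ : pt => c).
Proof.
apply: (@deriv_closed_smooth [set g | exists c : R, g = fun _ => c]); last by exists c.
move=> _ [d ->]; split=> [x|i x|i]; first exact: cst_continuous.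
  exact: derivable_cst.
by exists 0; apply: funext => x; exact: derive_cst.
Qed.

Inductive sum_of_products : (pt -> R) -> Prop :=
| sum_of_products0 : sum_of_products (fun _ => 0)
| sum_of_productsS u v w : smooth u -> smooth v -> sum_of_products w ->
    sum_of_products (fun x => u x * v x + w x).

Lemma sum_of_products_deriv_closed : deriv_closed sum_of_products.
Proof.
move=> g; elim=> [|u v w su sv _ [cw dw Dw]].
  split=> [x|i x|i]; [exact: cst_continuous | exact: derivable_cst |].
  have -> : 'D_(bv i) (fun _ : pt => 0 : R) = fun _ => 0.
    by apply: funext => x; exact: derive_cst.
  exact: sum_of_products0.
have [cu du Du] := smooth_deriv_closed su.
have [cv dv Dv] := smooth_deriv_closed sv.
have dM i x : is_derive x (bv i) (fun y => u y * v y + w y)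
    (u x * 'D_(bv i) v x + v x * 'D_(bv i) u x + 'D_(bv i) w x).
  have := is_deriveD (is_deriveM (derivableP (du i x)) (derivableP (dv i x)))
    (derivableP (dw i x)).
  by rewrite -![_ *: _]/(_ * _).
split=> [x|i x|i]; first exact: continuousD (continuousM (cu x) (cv x)) (cw x).
  by case: (dM i x).
have -> : 'D_(bv i) (fun x => u x * v x + w x) =
    fun x => u x * 'D_(bv i) v x + ('D_(bv i) u x * v x + 'D_(bv i) w x).
  by apply: funext => x; case: (dM i x) => _ ->; ring.
exact/(sum_of_productsS su (Dv i))/(sum_of_productsS (Du i) sv).
Qed.

Lemma smooth_mul u v : smooth u -> smooth v -> smooth (fun x => u x * v x).
Proof.
move=> su sv; have -> : (fun x => u x * v x) = fun x => u x * v x + 0.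
  by apply: funext => x; rewrite addr0.
apply: (deriv_closed_smooth sum_of_products_deriv_closed).
exact: sum_of_productsS su sv sum_of_products0.
Qed.

Lemma smooth_add u v : smooth u -> smooth v -> smooth (fun x => u x + v x).
Proof.
move=> su sv; have -> : (fun x => u x + v x) = fun x => u x * 1 + (v x * 1 + 0).
  by apply: funext => x; rewrite !mulr1 addr0.
apply: (deriv_closed_smooth sum_of_products_deriv_closed).
exact/(sum_of_productsS su (smooth_cst 1))/(sum_of_productsS sv (smooth_cst 1))/
  sum_of_products0.
Qed.

Lemma smooth_scale (c : R) u : smooth u -> smooth (fun x => c * u x).
Proof. exact: smooth_mul (smooth_cst c). Qed.

Lemma smooth_sub u v : smooth u -> smooth v -> smooth (fun x => u x - v x).
Proof.
move=> su sv; have -> : (fun x => u x - v x) = fun x => u x + (-1) * v x.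
  by apply: funext => x; rewrite mulN1r.
exact: smooth_add su (smooth_scale (-1) sv).
Qed.

Lemma smooth_bigprod (I : Type) (r : seq I) (F : I -> pt -> R) :
  (forall i, smooth (F i)) -> smooth (fun x => \prod_(i <- r) F i x).
Proof.
move=> sF; elim: r => [|i r IH].
  by under eq_fun do rewrite big_nil; exact: smooth_cst.
by under eq_fun do rewrite big_cons; exact: smooth_mul.
Qed.

Lemma smooth_bigsum (I : Type) (r : seq I) (F : I -> pt -> R) :
  (forall i, smooth (F i)) -> smooth (fun x => \sum_(i <- r) F i x).
Proof.
move=> sF; elim: r => [|i r IH].
  by under eq_fun do rewrite big_nil; exact: smooth_cst.
by under eq_fun do rewrite big_cons; exact: smooth_add.
Qed.

(* The derivatives of [u / g^k] are of the same form, with [k] increased by one. *)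
Lemma smooth_inv g : smooth g -> (forall x, g x != 0) -> smooth (fun x => (g x)^-1).
Proof.
move=> sg g0; have [cg dg Dg] := smooth_deriv_closed sg.
have dV i x : is_derive x (bv i) (fun y => (g y)^-1) (- (g x) ^- 2 * 'D_(bv i) g x).
  by split; [exact: derivableV | exact: deriveV].
pose F := [set w | exists u k, smooth u /\ w = fun x => u x * (g x)^-1 ^+ k].
have hF : deriv_closed F; last first.
  apply: (deriv_closed_smooth hF); exists (fun _ => 1), 1%N.
  by split; [exact: smooth_cst | apply: funext => x; rewrite mul1r expr1].
move=> _ [u [k [su ->]]]; have [cu du Du] := smooth_deriv_closed su.
have dP i x : is_derive x (bv i) (fun y => u y * (g y)^-1 ^+ k)
  (u x * (k%:R * (g x)^-1 ^+ k.-1 * (- (g x) ^- 2 * 'D_(bv i) g x))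
   + (g x)^-1 ^+ k * 'D_(bv i) u x).
  have := is_deriveM (derivableP (du i x)) (is_deriveX k (dV i x)).
  have -> : u * (fun y => (g y)^-1) ^+ k = fun y => u y * (g y)^-1 ^+ k.
    by apply: funext => y; rewrite /= exprfctE.
  by rewrite exprfctE -![_ *: _]/(_ * _).
split=> [x|i x|i].
- apply: continuousM (cu x) _.
  have := continuous_comp (continuousV (g0 x) (cg x)) (@exprn_continuous R k _).
  exact.
- by case: (dP i x).
exists (fun x => 'D_(bv i) u x * g x - k%:R * u x * 'D_(bv i) g x), k.+1; split.
  exact: smooth_sub (smooth_mul (Du i) sg) (smooth_mul (smooth_scale k%:R su) (Dg i)).
apply: funext => x; case: (dP i x) => _ ->; rewrite -exprVn.
have gx := g0 x; move: ('D_(bv i) u x) ('D_(bv i) g x) (u x) => a b c.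
case: k {dP} => [|k]; first by rewrite /= !expr0 !expr1; field.
by rewrite /= !exprS; move: ((g x)^-1 ^+ k) => P; field.
Qed.

Lemma coord_is_derive (j : 'I_n) (x v : pt) :
  is_derive x v (fun y : pt => y ord0 j) (v ord0 j).
Proof.
have di := @derivable_id _ _ x v.
split; first exact: (derivable_mxP id x v).1 di ord0 j.
have := derive_mx di; rewrite derive_id => /(congr1 (fun M : pt => M ord0 j)).
by rewrite mxE => <-.
Qed.

Lemma is_derive_comp_coord (k : R -> R) (j : 'I_n) (x v : pt) dk :
  is_derive (x ord0 j) (1 : R) k dk ->
  is_derive x v (fun y : pt => k (y ord0 j)) (v ord0 j * dk) /\
  {for x, continuous (fun y : pt => k (y ord0 j))}.
Proof.
move=> [dk1 <-].
have Dk : differentiable k (x ord0 j) by apply/derivable1_diffP.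
have Dc : differentiable (fun y : pt => y ord0 j) x by exact: differentiable_coord.
have D : differentiable (k \o (fun y : pt => y ord0 j)) x by exact: differentiable_comp.
split; last exact: differentiable_continuous D.
split; first exact: diff_derivable D.
have [_ Dcv] := coord_is_derive j x v.
rewrite (deriveE v D) diff_comp //= -(deriveE v Dc) Dcv.
by rewrite (deriv1E dk1) /= derive1E -[_ *: _]/(_ * _) mulrC.
Qed.

Lemma smooth_coord (j : 'I_n) : smooth (fun x : pt => x ord0 j).
Proof.
pose F := [set h : pt -> R | (h = fun x : pt => x ord0 j) \/ exists c : R, h = fun _ => c].
apply: (@deriv_closed_smooth F); last by left.
move=> _ [->|[c ->]]; last first.
  split=> [x|i x|i]; [exact: cst_continuous | exact: derivable_cst |].
  by right; exists 0; apply: funext => x; exact: derive_cst.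
split=> [x|i x|i].
- exact: (is_derive_comp_coord x (@is_derive_id _ _ (x ord0 j) (1 : R))).2.
- by case: (coord_is_derive j x (bv i)).
- right; exists (bv i ord0 j); apply: funext => x.
  by case: (coord_is_derive j x (bv i)).
Qed.

Lemma smooth_flat_affine (P : {poly R}) (s c : R) (j : 'I_n) :
  smooth (fun x : pt => flat P (s * x ord0 j + c)).
Proof.
pose F := [set h : pt -> R | exists P s c, h = fun x : pt => flat P (s * x ord0 j + c)].
apply: (@deriv_closed_smooth F); last by exists P, s, c.
move=> _ [Q [s' [c' ->]]].
have dA t : is_derive t (1 : R) (fun u : R => s' * u + c') s'.
  have := is_deriveD (is_deriveZ s' (is_derive_id t (1 : R))) (is_derive_cst c' t (1 : R)).
  by rewrite addr0 -[_ *: _]/(_ * _) mulr1.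
have H (x v : pt) := is_derive_comp_coord v
  (is_derive1_comp (f := flat Q) (g := fun u : R => s' * u + c')
    (flat_is_derive Q (s' * x ord0 j + c')) (dA (x ord0 j))).
split=> [x|i x|i]; [exact: (H x 0).2 | by case: (H x (bv i)).1 |].
exists ((bv i ord0 j * s') *: flat_dpoly Q), s', c'.
by apply: funext => x; case: (H x (bv i)).1 => _ ->; rewrite flatZ /=; ring.
Qed.

End SmoothCalculus.

Section TestFunctions.
Variables (R : realType) (n : nat).
Local Notation pt := 'rV[R]_n.
Local Notation C := R[i].
Implicit Types (phi psi : pt -> C).

Lemma compact_fsupp_sub phi psi : (forall x, phi x != 0 -> psi x != 0) ->
  compact (fsupp psi) -> compact (fsupp phi).
Proof.
move=> H cp; apply: (subclosed_compact _ cp); first exact: closed_closure.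
by apply: closureS => x; exact: H.
Qed.

Lemma csmooth_real (g : pt -> R) : smooth g -> csmooth (fun x => (g x)%:C%C).
Proof. by move=> sg; split => //=; exact: smooth_cst. Qed.

Lemma csmooth_mul phi psi : csmooth phi -> csmooth psi -> csmooth (fun x => phi x * psi x).
Proof.
move=> [p1 p2] [q1 q2]; split.
  have -> : (fun x => complex.Re (phi x * psi x)) = fun x =>
      complex.Re (phi x) * complex.Re (psi x) - complex.Im (phi x) * complex.Im (psi x).
    by apply: funext => x; case: (phi x) => ? ?; case: (psi x).
  exact: smooth_sub (smooth_mul p1 q1) (smooth_mul p2 q2).
have -> : (fun x => complex.Im (phi x * psi x)) = fun x =>
    complex.Re (phi x) * complex.Im (psi x) + complex.Im (phi x) * complex.Re (psi x).
  by apply: funext => x; case: (phi x) => ? ?; case: (psi x).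
exact: smooth_add (smooth_mul p1 q2) (smooth_mul p2 q1).
Qed.

Lemma test_mulr phi psi : csmooth phi -> test_fun psi -> test_fun (fun x => phi x * psi x).
Proof.
move=> sp [sq cq]; split; first exact: csmooth_mul.
by apply: compact_fsupp_sub cq => x; apply: contraNneq => ->; rewrite mulr0.
Qed.

Lemma test_rmul (g : pt -> R) phi : smooth g -> test_fun phi -> test_fun (rmul g phi).
Proof. by move=> sg; exact: test_mulr (csmooth_real sg). Qed.

Lemma test_fun0 : test_fun (fun _ : pt => 0 : C).
Proof.
split; first by split; exact: smooth_cst.
suff -> : fsupp (fun _ : pt => 0 : C) = set0 by exact: compact0.
rewrite /fsupp -closure0; congr closure.
by apply/seteqP; split => x //=; rewrite eqxx.
Qed.

End TestFunctions.

Section Cutoff.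
Variables (R : realType) (n : nat).
Local Notation pt := 'rV[R]_n.
Implicit Types (c x : pt) (a b : R).

Lemma rV_norm_le x r : 0 <= r -> (`|x| <= r) <-> (forall j, `|x ord0 j| <= r).
Proof.
move=> r0; rewrite /Num.norm /= mx_normrE; split => [H j|H].
  by apply: le_trans H; exact: le_bigmax (fun ij : 'I_1 * 'I_n => `|x ij.1 ij.2|) (ord0, j).
by apply: bigmax_le => // [[i j]] _ /=; rewrite (ord1 i); exact: H.
Qed.

Lemma rV_norm_lt x r : 0 < r -> (`|x| < r) <-> (forall j, `|x ord0 j| < r).
Proof.
move=> r0; rewrite /Num.norm /= mx_normrE; split => [H j|H].
  by apply: le_lt_trans H; exact: le_bigmax (fun ij : 'I_1 * 'I_n => `|x ij.1 ij.2|) (ord0, j).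
by apply: bigmax_lt => // [[i j]] _ /=; rewrite (ord1 i); exact: H.
Qed.

Lemma smooth_flat_coordD (P : {poly R}) b (j : 'I_n) :
  smooth (fun x : pt => flat P (x ord0 j + b)).
Proof.
have := @smooth_flat_affine R n P 1 b j; congr smooth.
by apply: funext => x; rewrite mul1r.
Qed.

Lemma smooth_flat_coordB (P : {poly R}) b (j : 'I_n) :
  smooth (fun x : pt => flat P (b - x ord0 j)).
Proof.
have := @smooth_flat_affine R n P (-1) b j; congr smooth.
by apply: funext => x; rewrite mulN1r addrC.
Qed.

(* [inner_bump c b] is positive exactly on the open cube [|x - c| < b] and
   [outer_bump c a] exactly outside the closed cube [|x - c| <= a]. *)
Definition inner_bump c b x : R :=
  \prod_(j < n) (flat 1 (x ord0 j + (b - c ord0 j)) * flat 1 ((c ord0 j + b) - x ord0 j)).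

Definition outer_bump c a x : R :=
  \sum_(j < n) (flat 1 (x ord0 j + (- a - c ord0 j)) + flat 1 ((c ord0 j - a) - x ord0 j)).

Definition cutoff c a b x : R := inner_bump c b x / (inner_bump c b x + outer_bump c a x).

Lemma smooth_inner_bump c b : smooth (inner_bump c b).
Proof.
apply: smooth_bigprod => j.
exact: smooth_mul (smooth_flat_coordD _ _ _) (smooth_flat_coordB _ _ _).
Qed.

Lemma smooth_outer_bump c a : smooth (outer_bump c a).
Proof.
apply: smooth_bigsum => j.
exact: smooth_add (smooth_flat_coordD _ _ _) (smooth_flat_coordB _ _ _).
Qed.

Lemma inner_bump_ge0 c b x : 0 <= inner_bump c b x.
Proof. by apply: prodr_ge0 => j _; apply: mulr_ge0; exact: flat1_ge0. Qed.

Lemma outer_bump_ge0 c a x : 0 <= outer_bump c a x.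
Proof. by apply: sumr_ge0 => j _; apply: addr_ge0; exact: flat1_ge0. Qed.

Lemma inner_bump_gt0 c b x : `|x - c| < b -> 0 < inner_bump c b x.
Proof.
move=> xb; have b0 : 0 < b by apply: le_lt_trans xb.
move/(rV_norm_lt _ b0): xb => H.
apply: prodr_gt0 => j _; have := H j; rewrite !mxE ltr_norml => /andP[h1 h2].
by apply: mulr_gt0; apply: flat1_gt0; lra.
Qed.

Lemma inner_bump_neq0 c b x : 0 < b -> inner_bump c b x != 0 -> `|x - c| < b.
Proof.
move=> b0 H; apply/(rV_norm_lt _ b0) => j; rewrite !mxE.
apply: contraNT H; rewrite ltr_norml negb_and -!leNgt => hj.
rewrite /inner_bump (bigD1 j) //=; apply/eqP.
case/orP: hj => hj.
  by rewrite (@flat_le0 _ 1 (x ord0 j + (b - c ord0 j))) ?mul0r //; lra.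
by rewrite (@flat_le0 _ 1 ((c ord0 j + b) - x ord0 j)) ?mulr0 ?mul0r //; lra.
Qed.

Lemma outer_bump_eq0 c a x : `|x - c| <= a -> outer_bump c a x = 0.
Proof.
move=> xa; have a0 : 0 <= a by apply: le_trans xa.
move/(rV_norm_le _ a0): xa => H.
apply: big1 => j _; have := H j; rewrite !mxE ler_norml => /andP[h1 h2].
by rewrite !flat_le0 ?addr0 //; lra.
Qed.

Lemma outer_bump_gt0 c a x : 0 <= a -> a < `|x - c| -> 0 < outer_bump c a x.
Proof.
move=> a0; rewrite ltNge => /negP xa.
have [j hj] : exists j, a < `|x ord0 j - c ord0 j|.
  apply: contrapT => H; apply/xa/(rV_norm_le _ a0) => j; rewrite !mxE leNgt.
  by apply/negP => ?; apply: H; exists j.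
rewrite /outer_bump (bigD1 j) //=; apply: ltr_pwDl; last first.
  by apply: sumr_ge0 => i _; apply: addr_ge0; exact: flat1_ge0.
move: hj; rewrite ltr_normr => /orP[h|h].
  by apply: ltr_pwDl; [apply: flat1_gt0; lra | exact: flat1_ge0].
by apply: ltr_pwDr; [apply: flat1_gt0; lra | exact: flat1_ge0].
Qed.

Lemma inner_outer_bump_gt0 c a b x : 0 <= a < b -> 0 < inner_bump c b x + outer_bump c a x.
Proof.
case/andP=> a0 ab; have [xa|xa] := leP `|x - c| a.
  by apply: ltr_pwDl; [exact/inner_bump_gt0/(le_lt_trans xa) | exact: outer_bump_ge0].
by apply: ltr_pwDr; [exact: outer_bump_gt0 | exact: inner_bump_ge0].
Qed.

Lemma smooth_cutoff c a b : 0 <= a < b -> smooth (cutoff c a b).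
Proof.
move=> ab; apply: smooth_mul (smooth_inner_bump c b) _.
apply: smooth_inv; first exact: smooth_add (smooth_inner_bump c b) (smooth_outer_bump c a).
by move=> x; rewrite gt_eqF // inner_outer_bump_gt0.
Qed.

Lemma cutoff_eq1 c a b x : a < b -> `|x - c| <= a -> cutoff c a b x = 1.
Proof.
move=> ab xa; rewrite /cutoff outer_bump_eq0 // addr0 divff // gt_eqF //.
exact/inner_bump_gt0/(le_lt_trans xa).
Qed.

Lemma cutoff_neq0 c a b x : 0 < b -> cutoff c a b x != 0 -> `|x - c| < b.
Proof.
move=> b0 H; apply: inner_bump_neq0 => //; apply: contraNneq H.
by rewrite /cutoff => ->; rewrite mul0r.
Qed.

End Cutoff.

Section NormedClosure.
Variables (K : numFieldType) (V W : normedModType K).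
Implicit Types (S : set V) (x y : V).

Lemma in_ball_norm x y (e : K) : ball x e y = (`|x - y| < e).
Proof. by rewrite -ball_normE. Qed.

Lemma closure_approx S x (e : K) : 0 < e -> closure S x -> exists2 a, S a & `|x - a| < e.
Proof.
move=> e0 cx; have [a [Sa xa]] := cx _ (@nbhsx_ballx _ _ x e e0).
by exists a; rewrite // -in_ball_norm.
Qed.

Lemma approx_closure S x :
  (forall e : K, 0 < e -> exists2 a, S a & `|x - a| < e) -> closure S x.
Proof.
move=> H B /nbhs_ballP [e /= e0 sub].
by have [a Sa xa] := H e e0; exists a; split => //; apply: sub; rewrite in_ball_norm.
Qed.

Lemma closureD S : (forall x y, S x -> S y -> S (x + y)) ->
  forall x y, closure S x -> closure S y -> closure S (x + y).
Proof.
move=> SD x y cx cy; apply: approx_closure => e e0.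
have e20 : 0 < e / 2 by rewrite divr_gt0.
have [a Sa xa] := closure_approx e20 cx; have [b Sb yb] := closure_approx e20 cy.
exists (a + b); first exact: SD.
rewrite opprD addrACA; apply: le_lt_trans (ler_normD _ _) _.
by rewrite [e]splitr ltrD.
Qed.

Lemma closureZ S : (forall c x, S x -> S (c *: x)) ->
  forall c x, closure S x -> closure S (c *: x).
Proof.
move=> SZ c x cx; have [->|c0] := eqVneq c 0.
  have [a [Sa _]] := cx setT filterT.
  by rewrite scale0r; apply: subset_closure; rewrite -(scale0r a); exact: SZ.
apply: approx_closure => e e0.
have ce : 0 < e / `|c| by rewrite divr_gt0 // normr_gt0.
have [a Sa xa] := closure_approx ce cx; exists (c *: a); first exact: SZ.
by rewrite -scalerBr normrZ mulrC -ltr_pdivlMr // normr_gt0.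
Qed.

Lemma bounded_closure_eq0 (T : V -> W) (M : K) S : 0 <= M ->
  (forall y z, T (y - z) = T y - T z) -> (forall y, `|T y| <= M * `|y|) ->
  (forall x, S x -> T x = 0) -> forall y, closure S y -> T y = 0.
Proof.
move=> M0 TB Tle TS y cy; apply/normr0_eq0/eqP; rewrite eq_le normr_ge0 andbT.
apply/ler_addgt0Pr => e e0; rewrite add0r.
have M1 : 0 < M + 1 by rewrite ltr_wpDl.
have [a Sa ya] := closure_approx (divr_gt0 e0 M1) cy.
rewrite -[T y]subr0 -(TS a Sa) -TB; apply: le_trans (Tle _) _.
apply: (@le_trans _ _ ((M + 1) * `|y - a|)); first by rewrite ler_wpM2r ?lerDl.
by rewrite mulrC -ler_pdivlMr // ltW.
Qed.

End NormedClosure.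

Section TestCutoff.
Variables (R : realType) (n : nat).
Local Notation pt := 'rV[R]_n.
Local Notation C := R[i].
Implicit Types (c x xi : pt) (a b : R) (phi rh : pt -> C).

Lemma cutoff_fixes rh phi : (forall x, fsupp phi x -> rh x = 1) ->
  (fun x => rh x * phi x) = phi.
Proof.
move=> H; apply: funext => x; have [->|px] := eqVneq (phi x) 0; first by rewrite mulr0.
by rewrite H ?mul1r //; exact: subset_closure.
Qed.

Definition cutoffC c a b : pt -> C := fun x => (cutoff c a b x)%:C%C.

Lemma cutoffC_test c a b : 0 <= a < b ->
  [/\ test_fun (cutoffC c a b), (forall x, `|x - c| <= a -> cutoffC c a b x = 1)
    & fsupp (cutoffC c a b) `<=` closed_ball c b].
Proof.
move=> /[dup] /andP[a0 ab] a0b; have b0 : 0 < b by apply: le_lt_trans ab.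
have cl : closed (closed_ball c b) by exact: closed_ball_closed.
have supp : fsupp (cutoffC c a b) `<=` closed_ball c b.
  rewrite ((closure_id _).1 cl).
  apply: closureS => x /= hx; rewrite closed_ballE // /closed_ball_ /= distrC ltW //.
  by apply: (cutoff_neq0 (a := a)) => //; apply: contraNneq hx; rewrite /cutoffC => ->.
split => //; last by move=> x xa; rewrite /cutoffC cutoff_eq1.
split; first exact/csmooth_real/smooth_cutoff.
apply: (subclosed_compact _ _ supp); first exact: closed_closure.
apply: bounded_closed_compact cl; rewrite /bounded_set /bounded_near; near=> M => x /=.
rewrite closed_ballE // /closed_ball_ /= => cx; rewrite -[x](subKr c).
apply: le_trans (ler_normB _ _) _; apply: (@le_trans _ _ (`|c| + b)); first by rewrite lerD2l.
by apply: ltW; near: M; apply: nbhs_pinfty_gt; exact: num_real.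
Unshelve. all: by end_near. Qed.

Lemma cutoff_compact (Kc : set pt) : compact Kc ->
  exists2 rh, test_fun rh & forall x, Kc x -> rh x = 1.
Proof.
move=> /compact_bounded [M [_ HM]]; set a := `|M| + 1.
have /HM HK : M < a by rewrite (le_lt_trans (ler_norm M)) ?ltrDl.
have a0 : 0 <= a < a + 1 by rewrite addr_ge0 //= ltrDl.
have [t1 t2 _] := cutoffC_test 0 a0.
by exists (cutoffC 0 a (a + 1)) => // x Kx; apply: t2; rewrite subr0; exact: HK.
Qed.

Lemma cutoff_local xi (V : set pt) : open V -> V xi ->
  exists2 r : R, 0 < r & exists2 rh, test_fun rh &
    (forall x, ball xi r x -> rh x = 1) /\ fsupp rh `<=` V.
Proof.
move=> oV Vxi; have /nbhs_ballP[e /= e0 sub] : nbhs xi V by exact: open_nbhs_nbhs.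
have e40 : 0 < e / 4 by rewrite divr_gt0.
have e24 : 0 <= e / 4 < e / 2 by rewrite ltW //= ltr_pM2l // ltf_pV2 ?posrE // ltr_nat.
have [t1 t2 t3] := cutoffC_test xi e24.
exists (e / 4) => //; exists (cutoffC xi (e / 4) (e / 2)) => //; split.
  by move=> x; rewrite in_ball_norm distrC => /ltW; exact: t2.
move=> x /t3; rewrite closed_ballE ?divr_gt0 // /closed_ball_ /= => hx; apply: sub.
by rewrite in_ball_norm (le_lt_trans hx) // ltr_pdivrMr // ltr_pMr // ltr1n.
Qed.

(* The quotient is [g phi / (g^2 + outer_bump xi r)]: the denominator never
   vanishes, and it equals [g^2] on the support of [phi]. *)
Lemma test_fun_divisible (g : pt -> R) xi : smooth g -> g xi != 0 ->
  exists2 r : R, 0 < r & forall phi, test_fun phi -> fsupp phi `<=` ball xi r ->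
    exists2 q, test_fun q & rmul g q = phi.
Proof.
move=> sg gxi.
have : \forall z \near xi, `|g xi - g z| < `|g xi|.
  by move/cvgrPdist_lt : ((sg [::]).1 xi); apply; rewrite normr_gt0.
case/nbhs_ballP => e /= e0 sub; exists (e / 2); first by rewrite divr_gt0.
have gz z : `|z - xi| <= e / 2 -> g z != 0.
  move=> hz; apply/eqP => gz0; have /sub : ball xi e z.
    by rewrite in_ball_norm distrC (le_lt_trans hz) // ltr_pdivrMr // ltr_pMr // ltr1n.
  by rewrite /= gz0 subr0 ltxx.
pose F z := g z * g z + outer_bump xi (e / 2) z.
have F0 z : F z != 0.
  apply: lt0r_neq0; have [zr|zr] := leP `|z - xi| (e / 2).
    by rewrite /F outer_bump_eq0 // addr0 -expr2 exprn_even_gt0 // gz.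
  apply: ltr_wpDl; first by rewrite -expr2 sqr_ge0.
  by apply: outer_bump_gt0 => //; rewrite divr_ge0 // ltW.
have sF : smooth F by exact: smooth_add (smooth_mul sg sg) (smooth_outer_bump _ _).
move=> phi tp sp; exists (rmul (fun z => g z / F z) phi).
  exact: test_rmul (smooth_mul sg (smooth_inv sF F0)) tp.
apply: funext => z; rewrite /rmul; have [->|pz] := eqVneq (phi z) 0; first by rewrite !mulr0.
have zr : `|z - xi| <= e / 2.
  by rewrite distrC ltW // -in_ball_norm; apply/sp/subset_closure.
have gz0 := gz z zr; rewrite mulrA -rmorphM /F outer_bump_eq0 // addr0.
by rewrite mulrA -expr2 divff ?mul1r // sqrf_eq0.
Qed.

End TestCutoff.

Section Restriction.
Variables (R : realType) (n m : nat) (X : completeNormedModType R[i]).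
Variables (A : ('rV[R]_n -> R[i]) -> X -> X) (f : 'rV[R]_n -> 'rV[R]_m).
Hypothesis hypA : hyperop_on [set: X] A.
Hypothesis smooth_f : forall j : 'I_m, smooth (fun x => f x ord0 j).
Local Notation pt := 'rV[R]_n.
Local Notation C := R[i].
Local Notation X' := (Xprime A f).
Local Notation f_ j := (fun z : pt => f z ord0 j).
Implicit Types (phi psi g rh : pt -> C) (y : X).

Lemma AD phi : test_fun phi -> forall y z, A phi (y + z) = A phi y + A phi z.
Proof.
by move=> tp y z; rewrite -[y in LHS]scale1r (hypA.1 phi tp).2.1 // scale1r.
Qed.

Lemma A0 phi : test_fun phi -> A phi 0 = 0.
Proof. by move=> tp; apply: (addrI (A phi 0)); rewrite -AD // !addr0. Qed.

Lemma AZ phi : test_fun phi -> forall (c : C) y, A phi (c *: y) = c *: A phi y.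
Proof. by move=> tp c y; rewrite -[c *: y]addr0 (hypA.1 phi tp).2.1 // A0 // addr0. Qed.

Lemma AB phi : test_fun phi -> forall y z, A phi (y - z) = A phi y - A phi z.
Proof. by move=> tp y z; rewrite AD // -scaleN1r AZ // scaleN1r. Qed.

Lemma AM phi psi : test_fun phi -> test_fun psi ->
  forall y, A (fun x => phi x * psi x) y = A phi (A psi y).
Proof. by move=> tp tq y; apply: hypA.2.2.2.1. Qed.

Lemma A_fun0 y : A (fun _ => 0) y = 0.
Proof.
have := hypA.2.1 1 _ _ (test_fun0 R n) (test_fun0 R n) y I.
under eq_fun do rewrite mulr0 addr0.
by rewrite scale1r => h; apply: (addrI (A (fun _ => 0) y)); rewrite addr0 -h.
Qed.

Lemma A_bounded phi : test_fun phi ->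
  exists2 M : C, 0 <= M & forall y, `|A phi y| <= M * `|y|.
Proof.
move=> tp; have [M HM] := (hypA.1 phi tp).2.2.
exists `|M|%:C%C; first by rewrite lecR.
by move=> y; apply: le_trans (HM y I) _; rewrite ler_wpM2r // lecR ler_norm.
Qed.

Lemma A_sep y : (forall phi, test_fun phi -> A phi y = 0) -> y = 0.
Proof. exact: hypA.2.2.2.2.2 y I. Qed.

Lemma test_rmul_f j phi : test_fun phi -> test_fun (rmul (f_ j) phi).
Proof. exact: test_rmul. Qed.

Lemma Xprime_annihilated (x : X) j g : X' x -> test_fun g -> A (rmul (f_ j) g) x = 0.
Proof.
move=> [phi [tp [y [-> hk]]]] tg; rewrite -AM //; last exact: test_rmul_f.
have -> : (fun z => rmul (f_ j) g z * phi z) = fun z => g z * rmul (f_ j) phi z.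
  by apply: funext => z; rewrite /rmul; ring.
by rewrite AM ?hk ?A0 //; exact: test_rmul_f.
Qed.

Lemma closure_Xprime_annihilated y j g : closure X' y -> test_fun g ->
  A (rmul (f_ j) g) y = 0.
Proof.
move=> cy tg; have tq := test_rmul_f j tg; have [M M0 HM] := A_bounded tq.
apply: (bounded_closure_eq0 M0 (AB tq) HM _ cy) => x Xx.
exact: Xprime_annihilated.
Qed.

Lemma Xprime_image phi y : test_fun phi -> closure X' y -> X' (A phi y).
Proof.
move=> tp cy; exists phi; split => //; exists y; split => // j.
exact: closure_Xprime_annihilated.
Qed.

Lemma Xprime_supp_zero phi y : test_fun phi -> (forall z, phi z != 0 -> f z = 0) ->
  X' (A phi y).
Proof.
move=> tp H; exists phi; split => //; exists y; split => // j.
suff -> : rmul (f_ j) phi = fun _ => 0 by exact: A_fun0.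
apply: funext => z; rewrite /rmul; have [->|pz] := eqVneq (phi z) 0; first by rewrite mulr0.
by rewrite (H z pz) mxE mul0r.
Qed.

Lemma Xprime_fixed (x : X) : X' x -> exists2 K, compact K &
  forall rh, test_fun rh -> (forall z, K z -> rh z = 1) -> A rh x = x.
Proof.
move=> [phi [[sp cp] [y [-> _]]]]; exists (fsupp phi) => // rh trh rh1.
by rewrite -AM ?cutoff_fixes.
Qed.

Lemma Xprime_cutoff (x : X) : X' x -> exists2 rh, test_fun rh & A rh x = x.
Proof.
move=> /Xprime_fixed [K cK Kx]; have [rh trh rh1] := cutoff_compact cK.
by exists rh => //; exact: Kx.
Qed.

Lemma XprimeD (x1 x2 : X) : X' x1 -> X' x2 -> X' (x1 + x2).
Proof.
move=> X1 X2; have [K1 cK1 K1x] := Xprime_fixed X1; have [K2 cK2 K2x] := Xprime_fixed X2.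
have [rh trh rh1] := cutoff_compact (compactU cK1 cK2).
exists rh; split => //; exists (x1 + x2); split => [|j].
  by rewrite AD // K1x ?K2x // => z Kz; apply: rh1; [right | left].
by rewrite AD ?Xprime_annihilated ?addr0 //; exact: test_rmul_f.
Qed.

Lemma XprimeZ (c : C) (x : X) : X' x -> X' (c *: x).
Proof.
move=> [phi [tp [y [-> hk]]]]; exists phi; split => //; exists (c *: y).
by rewrite AZ //; split => // j; rewrite AZ ?hk ?scaler0 //; exact: test_rmul_f.
Qed.

Lemma closure_Xprime_subspace : closed_subspace (closure X').
Proof.
split; first exact: closed_closure.
split.
  apply: subset_closure; rewrite -(A_fun0 0).
  by apply: Xprime_supp_zero (test_fun0 R n) _ => z; rewrite eqxx.
by split; [exact: closureD XprimeD | exact: closureZ XprimeZ].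
Qed.

(* [A (f_k g) (A (x_j phi) y) = A (f_k x_j g) (A phi y) = 0] for every [g], and the
   common kernel of the [A g] is trivial. *)
Lemma Xprime_coord_stable (j : 'I_n) phi y : test_fun phi -> X' (A phi y) ->
  X' (A (rmul (fun z => z ord0 j) phi) y).
Proof.
move=> tp Xp; have tx g : test_fun g -> test_fun (rmul (fun z => z ord0 j) g).
  exact: test_rmul (smooth_coord R j).
exists (rmul (fun z => z ord0 j) phi); split; first exact: tx.
exists y; split => // k; apply: A_sep => g tg.
rewrite -AM //; last exact/test_rmul_f/tx.
have -> : (fun z => g z * rmul (f_ k) (rmul (fun z => z ord0 j) phi) z) =
    fun z => rmul (f_ k) (rmul (fun z => z ord0 j) g) z * phi z.
  by apply: funext => z; rewrite /rmul; ring.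
by rewrite AM ?Xprime_annihilated //; [exact: tx | exact/test_rmul_f/tx].
Qed.

Lemma closure_Xprime_stable phi : test_fun phi -> A phi @` closure X' `<=` closure X'.
Proof. by move=> tp _ [y cy <-]; apply: subset_closure; exact: Xprime_image. Qed.

Lemma DomH_closure_Xprime : DomH (closure X') A = X'.
Proof.
apply/seteqP; split => [_ [phi [tp [y [cy ->]]]]|x Xx]; first exact: Xprime_image.
have [rh trh rhx] := Xprime_cutoff Xx.
by exists rh; split => //; exists x; split; [exact: subset_closure | rewrite rhx].
Qed.

Lemma hyperop_on_closure_Xprime : hyperop_on (closure X') A.
Proof.
case: hypA => H1 [H2 [H3 [H4 [_ H6]]]].
split=> [phi tp|]; first split=> [y cy|].
- by apply: (closure_Xprime_stable tp); exists y.
- split=> [c y z _ _|]; first exact: (H1 phi tp).2.1.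
  by have [M HM] := (H1 phi tp).2.2; exists M => y _; exact: HM.
split=> [c phi psi tp tq y _|]; first exact: H2.
split=> [phik hk e e0|]; first by have [N HN] := H3 phik hk e e0; exists N => k kN y _; exact: HN.
split=> [phi psi tp tq y _|]; first exact: H4.
by split=> [|y _]; [rewrite DomH_closure_Xprime | exact: H6].
Qed.

Lemma dsupp_interior_sub :
  interior [set x | f x = 0] `&` dsupp [set: X] A `<=` dsupp (closure X') A.
Proof.
move=> xi [iZ sA] U oU Uxi; set V := U `&` interior [set x | f x = 0].
have oV : open V by apply: openI => //; exact: open_interior.
have [r r0 [rh trh [rh1 rhV]]] := cutoff_local oV (conj Uxi iZ : V xi).
have [phi [tp [sp [y [_ Ay]]]]] := sA (ball xi r) (ball_open _ _) (ballxx _ r0).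
have rhV' z : rh z != 0 -> V z by move=> rz; apply: rhV; exact: subset_closure.
exists phi; split => //; split.
  by move=> z /sp /rh1 rz; have [] : V z by apply: rhV'; rewrite rz oner_neq0.
exists (A rh y); split.
  by apply/subset_closure/Xprime_supp_zero => // z /rhV' [_ /interior_subset].
rewrite -AM //; suff -> : (fun z => phi z * rh z) = phi by [].
by under eq_fun do rewrite mulrC; apply: cutoff_fixes => z /sp /rh1.
Qed.

Lemma dsupp_closure_Xprime_sub :
  dsupp (closure X') A `<=` [set x | f x = 0] `&` dsupp [set: X] A.
Proof.
move=> xi sY; split; last first.
  move=> U oU Ux; have [phi [tp [sp [y [_ Ay]]]]] := sY U oU Ux.
  by exists phi; split => //; split => //; exists y.
apply/eqP; apply: contraT => fxi.
have /existsP [j fj] : [exists j, f xi ord0 j != 0].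
  rewrite -negb_forall; apply: contra fxi => /forallP H.
  by apply/eqP/rowP => k; rewrite mxE; exact/eqP.
have [r r0 div] := test_fun_divisible (smooth_f j) fj.
have [phi [tp [sp [y [cy Ay]]]]] := sY (ball xi r) (ball_open _ _) (ballxx _ r0).
have [q tq qphi] := div phi tp sp.
by move: Ay; rewrite -qphi closure_Xprime_annihilated ?eqxx.
Qed.

Lemma closure_Xprime_neq0 : (exists U : set pt, open U /\ U `<=` [set x | f x = 0] /\
  U `&` dsupp [set: X] A !=set0) -> closure X' <> [set 0].
Proof.
move=> [U [oU [UZ [xi [Uxi sA]]]]] Y0.
have [phi [tp [sp [y [_ Ay]]]]] := sA U oU Uxi.
have : closure X' (A phi y).
  by apply/subset_closure/Xprime_supp_zero => // z pz; apply/UZ/sp/subset_closure.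
by rewrite Y0 => /= Ay0; rewrite Ay0 eqxx in Ay.
Qed.

End Restriction.

Theorem proposition9p1 (R : realType) (n m : nat)
  (X : completeNormedModType R[i])
  (A : ('rV[R]_n -> R[i]) -> X -> X) (f : 'rV[R]_n -> 'rV[R]_m) :
  hyperop_on [set: X] A ->
  (forall j : 'I_m, smooth (fun x => f x ord0 j)) ->
  let X' := Xprime A f in
  let Y := closure X' in
  let Z := [set x | f x = 0] in
  closed_subspace Y /\
      (forall (j : 'I_n) phi y, test_fun phi -> X' (A phi y) ->
          X' (A (rmul (fun z => z ord0 j) phi) y)) /\
      (forall phi, test_fun phi -> A phi @` Y `<=` Y) /\
      hyperop_on Y A /\
      DomH Y A = X' /\
      interior Z `&` dsupp [set: X] A `<=` dsupp Y A /\
      dsupp Y A `<=` Z `&` dsupp [set: X] A /\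
      ((exists U : set 'rV[R]_n, open U /\ U `<=` Z /\ U `&` dsupp [set: X] A !=set0) ->
         Y <> [set 0]).
Proof.
move=> hypA smooth_f X' Y Z.
split; first exact: closure_Xprime_subspace.
split; first by move=> j phi y; exact: Xprime_coord_stable.
split; first by move=> phi; exact: closure_Xprime_stable.
split; first exact: hyperop_on_closure_Xprime.
split; first exact: DomH_closure_Xprime.
split; first exact: dsupp_interior_sub.
split; first exact: dsupp_closure_Xprime_sub.
exact: closure_Xprime_neq0.
Qed.
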